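(* For every integer $n\ge 2$, let $\mathcal{A}_n$ denote the set of Dyck $n$-paths whose terminal descent has even length and all of whose other descents to ground level (if any) have odd length. Then $|\mathcal{A}_n| = C_{n-1}$, where $C_m=\frac{1}{m+1}\binom{2m}{m}$ is the $m$-th Catalan number.
   Context: A Dyck $n$-path is a lattice path consisting of $n$ upsteps $U=(1,1)$ and $n$ downsteps $D=(1,-1)$ that starts and ends at height $0$ (ground level) and never goes below ground level. A descent is a maximal run of consecutive downsteps; its length is the number of downsteps in it. The terminal descent is the descent that ends at the final point of the path. A return is a downstep ending at ground level, and a descent to ground level is a descent whose last step is a return. *)

From mathcomp Require Import all_boot.
Set Implicit Arguments. Unset Strict Implicit. Unset Printing Implicit Defensive.

(* A lattice path is encoded as a sequence of steps:
   true = U = (1,1) (upstep), false = D = (1,-1) (downstep). *)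

Definition ups (p : seq bool) (k : nat) : nat := count id (take k p).
Definition downs (p : seq bool) (k : nat) : nat := count negb (take k p).

Definition dyck_path (n : nat) (p : seq bool) : bool :=
  [&& count id p == n, count negb p == n &
      [forall k : 'I_(size p).+1, downs p k <= ups p k]].

(* The steps at positions i, ..., j-1 (0-indexed) form a descent, i.e. a
   maximal run of consecutive downsteps: i < j, all of them are D, the step
   before (if any) is not D and the step at position j (if any) is not D.
   Its length is j - i, and it ends at the point after j steps. *)
Definition is_descent (p : seq bool) (i j : nat) : bool :=
  [&& i < j, j <= size p,
      [forall k : 'I_(size p), (i <= k < j) ==> ~~ nth true p k],
      (i == 0) || nth false p i.-1 &
      (j == size p) || nth false p j].

Definition ends_at_ground (p : seq bool) (j : nat) : bool :=
  ups p j == downs p j.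

Definition in_A (n : nat) (p : seq bool) : bool :=
  dyck_path n p &&
  [forall i : 'I_(size p).+1, forall j : 'I_(size p).+1,
     is_descent p i j ==>
       (if j == size p :> nat then ~~ odd (j - i)
        else ends_at_ground p j ==> odd (j - i))].

Definition A_set (n : nat) : {set (2 * n).-tuple bool} :=
  [set t : (2 * n).-tuple bool | in_A n t].

Definition catalan (m : nat) : nat := 'C(2 * m, m) %/ m.+1.

From mathcomp Require Import all_boot zify.
From Stdlib Require Import ClassicalEpsilon.
Set Implicit Arguments. Unset Strict Implicit. Unset Printing Implicit Defensive.

(* A path p of A_n factors uniquely as p = S U W U Q D D with W, Q Dyck paths,
   Q of even terminal descent, and S a Dyck path whose returns all end odd
   descents: the terminal descent of p is that of Q plus two, and the other
   returns of p are those of S.  Every nonempty Dyck path x factors uniquely as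
   x = Q S U W D with Q, S, W of the same kinds, Q ending at the last return of
   Q S that ends an even descent.  So p |-> Q S U W D is a bijection from A_n
   onto the Dyck (n-1)-paths, which the reflection principle counts by C_(n-1). *)

Lemma card_rel_bij (T U : finType) (A : {set T}) (B : {set U}) (R : T -> U -> Prop) :
  (forall t, t \in A -> exists2 u, u \in B & R t u) ->
  (forall u, u \in B -> exists2 t, t \in A & R t u) ->
  (forall t u u', R t u -> R t u' -> u = u') ->
  (forall t t' u, R t u -> R t' u -> t = t') ->
  #|A| = #|B|.
Proof.
move=> totA totB funR injR.
have [B0 | [u0 _]] := set_0Vmem B.
  rewrite B0 cards0; apply/eqP; rewrite cards_eq0; apply/eqP/setP => t.
  by rewrite inE; apply/negP => /totA[u]; rewrite B0 inE.
pose f t := epsilon (inhabits u0) (R t).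
have fR t : t \in A -> R t (f t).
  by move=> /totA[u _ Rtu]; apply: epsilon_spec; exists u.
have f_inj : {in A &, injective f}.
  by move=> t t' /fR Rt /fR Rt' eq_f; apply: injR Rt _; rewrite eq_f.
rewrite -(card_in_imset f_inj); apply: eq_card => u; apply/imsetP/idP.
- by case=> t At ->; have [u' Bu' /(funR _ _ _ (fR t At)) ->] := totA t At.
- move=> Bu; have [t At Rtu] := totB u Bu.
  by exists t => //; apply: funR Rtu (fR t At).
Qed.

Lemma card_count_tuples L k : #|[set t : L.-tuple bool | count id t == k]| = 'C(L, k).
Proof.
pose support (t : L.-tuple bool) := [set i : 'I_L | tnth t i].
have card_support t : #|support t| = count id t.
  rewrite cardE /enum_mem -enumT size_filter -[in RHS](map_tnth_enum t) count_map.
  by apply: eq_count => i /=; rewrite inE.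
have support_inj : injective support.
  move=> t1 t2 eq_t; apply: eq_from_tnth => i.
  by have := congr1 (fun X : {set 'I_L} => i \in X) eq_t; rewrite !inE.
rewrite -[in RHS](card_ord L) -card_draws -(card_imset _ support_inj).
apply: eq_card => X; rewrite [in RHS]inE; apply/imsetP/idP.
  by case=> t; rewrite inE => /eqP <- ->; rewrite card_support.
move=> /eqP cardX; exists [tuple (i \in X) | i < L].
  by rewrite inE -card_support -cardX; apply/eqP/eq_card => i; rewrite !inE tnth_mktuple.
by apply/setP => i; rewrite !inE tnth_mktuple.
Qed.

Lemma catalan_ballot m : catalan m = 'C(2 * m, m) - 'C(2 * m, m.+1).
Proof.
have := mul_bin_left (2 * m) m; rewrite (_ : 2 * m - m = m); last lia.
move=> bin_rec; have le_bin : 'C(2 * m, m.+1) <= 'C(2 * m, m) by nia.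
have bin_mul : 'C(2 * m, m) = ('C(2 * m, m) - 'C(2 * m, m.+1)) * m.+1 by nia.
by rewrite /catalan [X in X %/ _]bin_mul mulnK.
Qed.

Lemma count_id_negb s : count id s + count negb s = size s.
Proof. by rewrite -(count_predC id). Qed.

Fixpoint nonneg (h : nat) (s : seq bool) : bool :=
  match s with
  | [::] => true
  | b :: s' => if b then nonneg h.+1 s' else if h is h'.+1 then nonneg h' s' else false
  end.

Lemma nonneg_prefixes h s :
  nonneg h s <-> forall k, count negb (take k s) <= h + count id (take k s).
Proof.
elim: s h => [|b s IH] h /=; first by split => // _ k.
split => [nn_s [|k] /= | prefix_s]; first lia.
- case: b nn_s => [/(IH h.+1).1 /(_ k) | ]; first lia.
  by case: h => [|h] // /(IH h).1 /(_ k); lia.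
- case: b prefix_s => prefix_s.
    by apply/IH => k; have := prefix_s k.+1; rewrite /=; lia.
  case: h prefix_s => [|h] prefix_s; first by have := prefix_s 1; rewrite /= take0.
  by apply/IH => k; have := prefix_s k.+1; rewrite /=; lia.
Qed.

Lemma nonneg_count h s : nonneg h s -> count negb s <= h + count id s.
Proof. by move=> /nonneg_prefixes /(_ (size s)); rewrite take_size. Qed.

Lemma forall_prefix_nonneg p :
  [forall k : 'I_(size p).+1, downs p k <= ups p k] = nonneg 0 p.
Proof.
apply/forallP/idP => [prefix_p | /nonneg_prefixes prefix_p k]; last exact: prefix_p.
apply/nonneg_prefixes => k; have [le_k | lt_k] := leqP k (size p).
  exact: (prefix_p (Ordinal (le_k : k < (size p).+1))).
by rewrite take_oversize ?(ltnW lt_k) //; have := prefix_p ord_max; rewrite /downs /ups take_size.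
Qed.

Lemma dyck_pathE m p : size p = 2 * m -> dyck_path m p = (count id p == m) && nonneg 0 p.
Proof.
move=> size_p; rewrite /dyck_path forall_prefix_nonneg.
have := count_id_negb p; rewrite size_p; case: eqP => //= -> count_p.
by rewrite (_ : count negb p = m) ?eqxx //; lia.
Qed.

(* Andre's reflection: the steps after the first one below ground level are
   swapped. *)
Fixpoint reflect_after_dip (h : nat) (s : seq bool) : seq bool :=
  match s with
  | [::] => [::]
  | b :: s' =>
    if b then true :: reflect_after_dip h.+1 s'
    else if h is h'.+1 then false :: reflect_after_dip h' s' else false :: map negb s'
  end.

Lemma size_reflect_after_dip h s : size (reflect_after_dip h s) = size s.
Proof. by elim: s h => [|[] s IH] [|h] //=; rewrite ?IH ?size_map. Qed.

Lemma reflect_after_dipK h : involutive (reflect_after_dip h).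
Proof.
move=> s; elim: s h => [|[] s IH] [|h] //=; rewrite ?IH //.
by rewrite mapK //; exact: negbK.
Qed.

Lemma nonneg_reflect_after_dip h s :
  nonneg h (reflect_after_dip h s) = nonneg h s.
Proof. by elim: s h => [|[] s IH] [|h] //=. Qed.

Lemma count_reflect_after_dip h s : ~~ nonneg h s ->
  count id (reflect_after_dip h s) + count id s + 2 * h + 2
  = count negb (reflect_after_dip h s) + count negb s.
Proof.
elim: s h => [|[] s IH] [|h] //= dip_s.
- by have := IH 1 dip_s; lia.
- by have := IH h.+2 dip_s; lia.
- by rewrite !count_map (eq_count negbK) (@eq_count _ (preim negb id) negb) //; lia.
- by have := IH h dip_s; lia.
Qed.

Definition reflect_tuple L (t : L.-tuple bool) : L.-tuple bool :=
  @Tuple L bool (reflect_after_dip 0 t)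
    (introT eqP (etrans (size_reflect_after_dip 0 t) (size_tuple t))).

Lemma reflect_tupleK L : involutive (@reflect_tuple L).
Proof. by move=> t; apply: val_inj; rewrite /= reflect_after_dipK. Qed.

Lemma card_balanced_nondyck m : 0 < m ->
  #|[set t : (2 * m).-tuple bool | (count id t == m) && ~~ dyck_path m t]|
  = 'C(2 * m, m.+1).
Proof.
move=> m_gt0; rewrite -bin_sub; last lia.
rewrite (_ : 2 * m - m.+1 = m.-1); last lia.
rewrite -card_count_tuples -(card_imset _ (inv_inj (@reflect_tupleK _))).
have count_reflect (t : (2 * m).-tuple bool) : ~~ nonneg 0 t ->
    (count id (reflect_after_dip 0 t) + count id t).+1 = 2 * m.
  move=> dip_t; have := count_reflect_after_dip dip_t.
  have := count_id_negb t; have := count_id_negb (reflect_after_dip 0 t).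
  rewrite size_reflect_after_dip size_tuple; lia.
apply: eq_card => u; rewrite [in RHS]inE; apply/imsetP/idP.
- case=> t; rewrite inE dyck_pathE ?size_tuple // => /andP[/eqP count_t dip_t] ->.
  rewrite count_t eqxx in dip_t; have := count_reflect _ dip_t; rewrite count_t.
  by move=> count_u; apply/eqP; rewrite /=; lia.
- move=> /eqP count_u; exists (reflect_tuple u); last by rewrite reflect_tupleK.
  have dip_u : ~~ nonneg 0 u.
    apply/negP => /nonneg_count; have := count_id_negb u; rewrite size_tuple count_u.
    lia.
  have := count_reflect _ dip_u; rewrite inE dyck_pathE ?size_tuple //=.
  rewrite nonneg_reflect_after_dip (negbTE dip_u) andbF andbT count_u => count_r.
  by apply/eqP; lia.
Qed.

Lemma card_dyck_paths m : 0 < m ->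
  #|[set t : (2 * m).-tuple bool | dyck_path m t]| = catalan m.
Proof.
move=> m_gt0; rewrite catalan_ballot -card_balanced_nondyck // -card_count_tuples.
set D := [set t : (2 * m).-tuple bool | dyck_path m t].
set Bal := [set t : (2 * m).-tuple bool | count id t == m].
have <- : Bal :&: D = D.
  apply/setP => t; rewrite !inE dyck_pathE ?size_tuple //.
  by case: (count id t == m).
have -> : [set t : (2 * m).-tuple bool | (count id t == m) && ~~ dyck_path m t]
          = Bal :\: D.
  by apply/setP => t; rewrite !inE andbC.
by rewrite -(cardsID D Bal) addnK.
Qed.

Definition dyck (s : seq bool) : Prop :=
  (forall k, downs s k <= ups s k) /\ count id s = count negb s.

Lemma dyck_pathP n p : dyck_path n p <-> dyck p /\ count id p = n.
Proof.
rewrite /dyck_path forall_prefix_nonneg; split.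
  case/and3P => /eqP <- /eqP count_p /nonneg_prefixes prefix_p.
  by split; first split; [exact: prefix_p | rewrite count_p |].
by case=> [[prefix_p ->] <-]; rewrite !eqxx; apply/nonneg_prefixes.
Qed.

Lemma ups_over s k : size s <= k -> ups s k = count id s.
Proof. by move=> le_sk; rewrite /ups take_oversize. Qed.
Lemma downs_over s k : size s <= k -> downs s k = count negb s.
Proof. by move=> le_sk; rewrite /downs take_oversize. Qed.
Lemma ups_catl a c k : k <= size a -> ups (a ++ c) k = ups a k.
Proof. by move=> le_ka; rewrite /ups takel_cat. Qed.
Lemma downs_catl a c k : k <= size a -> downs (a ++ c) k = downs a k.
Proof. by move=> le_ka; rewrite /downs takel_cat. Qed.
Lemma ups_catr a c k : ups (a ++ c) (size a + k) = count id a + ups c k.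
Proof. by rewrite /ups takeD take_size_cat // drop_size_cat // count_cat. Qed.
Lemma downs_catr a c k : downs (a ++ c) (size a + k) = count negb a + downs c k.
Proof. by rewrite /downs takeD take_size_cat // drop_size_cat // count_cat. Qed.

Lemma ends_at_ground_catl a c k :
  k <= size a -> ends_at_ground (a ++ c) k = ends_at_ground a k.
Proof. by move=> le_ka; rewrite /ends_at_ground ups_catl ?downs_catl. Qed.

Lemma ends_at_ground_catr a c k : count id a = count negb a ->
  ends_at_ground (a ++ c) (size a + k) = ends_at_ground c k.
Proof. by move=> count_a; rewrite /ends_at_ground ups_catr downs_catr count_a eqn_add2l. Qed.

Lemma ends_at_ground_size s : dyck s -> ends_at_ground s (size s).
Proof. by case=> _ count_s; rewrite /ends_at_ground ups_over // downs_over // count_s. Qed.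

Definition elevate (b : seq bool) : seq bool := true :: rcons b false.

Lemma size_elevate b : size (elevate b) = (size b).+2.
Proof. by rewrite /= size_rcons. Qed.

Lemma count_elevate (a : pred bool) b : count a (elevate b) = a true + count a b + a false.
Proof. by rewrite /= -cats1 count_cat /= addn0 addnA. Qed.

Lemma ups_elevate b k : k <= size b -> ups (elevate b) k.+1 = (ups b k).+1.
Proof. by move=> le_kb; rewrite /ups /= -cats1 takel_cat. Qed.

Lemma downs_elevate b k : k <= size b -> downs (elevate b) k.+1 = downs b k.
Proof. by move=> le_kb; rewrite /downs /= -cats1 takel_cat. Qed.

Lemma dyck_cat a b : dyck a -> dyck b -> dyck (a ++ b).
Proof.
move=> [prefix_a count_a] [prefix_b count_b]; split; last by rewrite !count_cat count_a count_b.
move=> k; have [le_ka | lt_ak] := leqP k (size a); first by rewrite ups_catl ?downs_catl.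
rewrite -(subnKC (ltnW lt_ak)) ups_catr downs_catr count_a leq_add2l; exact: prefix_b.
Qed.

Lemma elevate_above b k : dyck b -> 0 < k < (size b).+2 ->
  downs (elevate b) k < ups (elevate b) k.
Proof.
case: k => [|k] [prefix_b _] // /andP[_ lt_kb].
by rewrite ups_elevate ?downs_elevate // ltnS prefix_b.
Qed.

Lemma dyck_elevate b : dyck b -> dyck (elevate b).
Proof.
move=> dyck_b; have [_ count_b] := dyck_b.
split; last by rewrite !count_elevate count_b /=; lia.
case=> [|k]; first by rewrite /downs /ups.
have [lt_kb | le_bk] := ltnP k (size b).+1; first by apply: ltnW; apply: elevate_above.
by rewrite ups_over ?downs_over ?size_elevate // !count_elevate count_b /=; lia.
Qed.

Lemma cat_elevate_above a b k : dyck a -> dyck b -> size a < k < size a + (size b).+2 ->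
  downs (a ++ elevate b) k < ups (a ++ elevate b) k.
Proof.
move=> [_ count_a] dyck_b /andP[lt_ak lt_kb].
rewrite -(subnKC (ltnW lt_ak)) ups_catr downs_catr count_a ltn_add2l.
by apply: elevate_above => //; apply/andP; split; lia.
Qed.

Lemma dyck_take_return s j : dyck s -> ends_at_ground s j -> dyck (take j s).
Proof.
move=> [prefix_s _] /eqP ground_j; split=> [k|//].
have [le_kj | lt_jk] := leqP k j; first by rewrite /downs /ups take_takel //; exact: prefix_s.
have le_size : size (take j s) <= k by rewrite size_take_min; lia.
by rewrite ups_over ?downs_over //; apply/eq_leq/esym.
Qed.

Lemma dyck_catr a c : count id a = count negb a -> dyck (a ++ c) -> dyck c.
Proof.
move=> count_a [prefix_ac count_ac]; split=> [k|].
  by have := prefix_ac (size a + k); rewrite ups_catr downs_catr count_a leq_add2l.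
by move: count_ac; rewrite !count_cat count_a => /addnI.
Qed.

Lemma dyck_drop_return s j : dyck s -> ends_at_ground s j -> dyck (drop j s).
Proof.
move=> dyck_s ground_j; apply: (@dyck_catr (take j s)); last by rewrite cat_take_drop.
by have [] := dyck_take_return dyck_s ground_j.
Qed.

Lemma dyck_arch s : dyck s -> s != [::] ->
  (forall j, 0 < j < size s -> ~~ ends_at_ground s j) -> exists2 b, s = elevate b & dyck b.
Proof.
case: s => [|[] s] [prefix_s count_s] // _; last first.
  by have := prefix_s 1; rewrite /downs /ups /= take0.
case/lastP: s prefix_s count_s => [|b []] prefix_s count_s no_return //.
  have := prefix_s (size b).+1; move: count_s.
  by rewrite /downs /ups /= -cats1 take_size_cat // !count_cat /=; lia.
rewrite -/(elevate b) in prefix_s count_s no_return *; exists b => //.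
split=> [k|]; last by move: count_s; rewrite !count_elevate /=; lia.
have [le_kb | lt_bk] := leqP k (size b); last first.
  by rewrite ups_over ?downs_over ?(ltnW lt_bk) //; move: count_s; rewrite !count_elevate /=; lia.
have := no_return k.+1; rewrite /ends_at_ground size_elevate /= ltnS.
have := prefix_s k.+1; rewrite ups_elevate // downs_elevate //.
by move=> + /(_ (leq_ltn_trans le_kb (ltnSn _))); lia.
Qed.

Lemma dyck_last_arch s : dyck s -> s != [::] ->
  exists a b, [/\ s = a ++ elevate b, dyck a & dyck b].
Proof.
move=> dyck_s ns; pose P j := (j < size s) && ends_at_ground s j.
have P0 : exists j, P j.
  by exists 0; rewrite /P lt0n size_eq0 ns /ends_at_ground /ups /downs take0.
have P_bound i : P i -> i <= size s by case/andP => /ltnW.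
have [j /andP[lt_js ground_j] max_j] := ex_maxnP P0 P_bound.
have dyck_a := dyck_take_return dyck_s ground_j.
have [_ count_a] := dyck_a.
have size_a : size (take j s) = j by rewrite size_takel // ltnW.
have [b eq_r dyck_b] : exists2 b, drop j s = elevate b & dyck b.
  apply: dyck_arch; first exact: dyck_drop_return.
    by rewrite -size_eq0 size_drop subn_eq0 -ltnNge.
  move=> k /andP[k_gt0 lt_kr]; apply/negP => ground_k.
  have : P (j + k).
    have := ends_at_ground_catr (drop j s) k count_a.
    rewrite size_a cat_take_drop ground_k /P => ->; rewrite andbT.
    by move: lt_kr; rewrite size_drop; lia.
  by move/max_j; lia.
by exists (take j s), b; rewrite -eq_r cat_take_drop.
Qed.

Lemma cat_elevate_inj a b a' b' : dyck a -> dyck b -> dyck a' -> dyck b' ->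
  a ++ elevate b = a' ++ elevate b' -> a = a' /\ b = b'.
Proof.
wlog le_aa' : a b a' b' / size a <= size a'.
  move=> wlog_le dyck_a dyck_b dyck_a' dyck_b' eq_ab.
  have [le_aa' | /ltnW le_a'a] := leqP (size a) (size a'); first exact: wlog_le.
  by have [-> ->] := wlog_le a' b' a b le_a'a dyck_a' dyck_b' dyck_a dyck_b (esym eq_ab).
move=> dyck_a dyck_b [_ count_a'] _ eq_ab.
have eq_size : size a = size a'.
  apply/eqP; rewrite eqn_leq le_aa' leqNgt; apply/negP => lt_aa'.
  have size_ab : size a + (size b).+2 = size a' + (size b').+2.
    by rewrite -!size_elevate -!size_cat eq_ab.
  have lt_a' : size a < size a' < size a + (size b).+2 by rewrite lt_aa' /=; lia.
  have := cat_elevate_above dyck_a dyck_b lt_a'.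
  by rewrite eq_ab ups_catl // downs_catl // ups_over // downs_over // count_a' ltnn.
move/eqP: eq_ab; rewrite eqseq_cat // => /andP[/eqP -> /eqP[eq_b]].
by split=> //; apply: rcons_injl eq_b.
Qed.

Definition term_desc (s : seq bool) : nat := find id (rev s).

Lemma term_desc_cat s b :
  term_desc (s ++ b) = if has id b then term_desc b else size b + term_desc s.
Proof. by rewrite /term_desc rev_cat find_cat has_rev size_rev. Qed.

Lemma term_desc_rcons s x : term_desc (rcons s x) = if x then 0 else (term_desc s).+1.
Proof. by rewrite -cats1 term_desc_cat; case: x. Qed.

Lemma term_desc_le s : term_desc s <= size s.
Proof. by rewrite /term_desc -size_rev find_size. Qed.

Lemma nth_term_desc_down s k : size s - term_desc s <= k < size s -> nth true s k = false.
Proof.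
move=> /andP[le_k lt_k]; have lt_rev : size s - k.+1 < term_desc s by lia.
have := before_find true lt_rev; rewrite nth_rev; last by have := term_desc_le s; lia.
by rewrite (_ : size s - (size s - k.+1).+1 = k) //; lia.
Qed.

Lemma nth_term_desc_up s : term_desc s < size s -> nth false s (size s - (term_desc s).+1).
Proof.
move=> lt_s; have has_up : has id (rev s) by rewrite has_find size_rev.
by have := nth_find false has_up; rewrite nth_rev // size_rev.
Qed.

Lemma dyck_has_up b : dyck b -> b != [::] -> has id b.
Proof. by move=> [_ count_b]; rewrite -size_eq0 -count_id_negb -count_b has_count; lia. Qed.

Lemma term_desc_cat_dyck a b : dyck b -> b != [::] -> term_desc (a ++ b) = term_desc b.
Proof. by move=> dyck_b nb; rewrite term_desc_cat dyck_has_up. Qed.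

Lemma term_desc_cat_elevate a b : dyck b -> term_desc (a ++ elevate b) = (term_desc b).+1.
Proof.
move=> dyck_b; rewrite /elevate -rcons_cons -rcons_cat term_desc_rcons -cat_rcons.
by have [-> | nb] := eqVneq b [::]; rewrite ?cats0 ?term_desc_rcons ?term_desc_cat_dyck.
Qed.

Lemma ups_step p k : k < size p -> ups p k.+1 = ups p k + nth false p k.
Proof. by move=> lt_kp; rewrite /ups (take_nth false lt_kp) -cats1 count_cat /= addn0. Qed.

Lemma downs_step p k : k < size p -> downs p k.+1 = downs p k + ~~ nth false p k.
Proof. by move=> lt_kp; rewrite /downs (take_nth false lt_kp) -cats1 count_cat /= addn0. Qed.

Lemma down_before_return p j : dyck p -> j < size p -> ends_at_ground p j.+1 ->
  nth false p j = false.
Proof.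
move=> [prefix_p _] lt_jp; rewrite /ends_at_ground ups_step // downs_step //.
by have := prefix_p j; case: (nth false p j) => //= le_j /eqP; lia.
Qed.

Lemma up_after_return p j : dyck p -> j < size p -> ends_at_ground p j -> nth false p j.
Proof.
move=> [prefix_p _] lt_jp /eqP ground_j; have := prefix_p j.+1.
by rewrite ups_step // downs_step // ground_j; case: (nth false p j) => //=; lia.
Qed.

Lemma descent_of_return p j : dyck p -> 0 < j <= size p -> ends_at_ground p j ->
  is_descent p (j - term_desc (take j p)) j.
Proof.
case: j => [|j] dyck_p // /andP[_ lt_jp] ground_j.
have size_take : size (take j.+1 p) = j.+1 by rewrite size_takel.
have td_le := term_desc_le (take j.+1 p); rewrite size_take in td_le.
have td_gt0 : 0 < term_desc (take j.+1 p).
  by rewrite (take_nth false lt_jp) term_desc_rcons (down_before_return dyck_p).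
apply/and5P; split => //; first lia.
- apply/forallP => k; apply/implyP => /andP[le_k lt_k].
  by rewrite -(nth_take true lt_k) nth_term_desc_down // size_take; lia.
- have [-> // | ne0] := eqVneq (j.+1 - term_desc (take j.+1 p)) 0.
  have lt_td : term_desc (take j.+1 p) < size (take j.+1 p) by rewrite size_take; lia.
  have := nth_term_desc_up lt_td; rewrite size_take nth_take; last lia.
  by rewrite (_ : (j.+1 - _).-1 = j - term_desc (take j.+1 p)) ?orbT //; lia.
- by have [// | ne_j] := eqVneq j.+1 (size p); rewrite up_after_return //; lia.
Qed.

Lemma term_desc_descent p i j : is_descent p i j -> term_desc (take j p) = j - i.
Proof.
case/and5P => lt_ij le_jp /forallP desc_ij up_i _.
have -> : take j p = take i p ++ nseq (j - i) false.
  rewrite -{1}(subnKC (ltnW lt_ij)) takeD; congr (_ ++ _).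
  have size_mid : size (take (j - i) (drop i p)) = j - i.
    by rewrite size_takel // size_drop; lia.
  apply: (@eq_from_nth _ true); first by rewrite size_mid size_nseq.
  move=> k; rewrite size_mid => lt_k; rewrite nth_take // nth_drop nth_nseq lt_k.
  have lt_ikp : i + k < size p by lia.
  have in_range : i <= i + k < j by apply/andP; split; lia.
  by have /implyP /(_ in_range) /negbTE := desc_ij (Ordinal lt_ikp).
rewrite term_desc_cat has_nseq andbF size_nseq.
case: i {desc_ij} lt_ij up_i => [|i] lt_ij /= up_i; first by rewrite take0 addn0 subn0.
by rewrite (take_nth false) ?term_desc_rcons ?up_i ?addn0 //; lia.
Qed.

Lemma in_A_returns n p : in_A n p <->
  [/\ dyck_path n p, ~~ odd (term_desc p)
    & forall j, 0 < j < size p -> ends_at_ground p j -> odd (term_desc (take j p))].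
Proof.
split=> [/andP[dyck_np /forallP desc_ok] | [dyck_np even_p odd_p]].
  have [dyck_p _] := (dyck_pathP n p).1 dyck_np.
  have desc_return j : 0 < j <= size p -> ends_at_ground p j ->
      if j == size p then ~~ odd (term_desc (take j p)) else odd (term_desc (take j p)).
    move=> j_range ground_j; have desc := descent_of_return dyck_p j_range ground_j.
    have td_le := term_desc_le (take j p); rewrite size_takel in td_le; last lia.
    have lt_i : j - term_desc (take j p) < (size p).+1 by lia.
    have lt_j : j < (size p).+1 by lia.
    have := forallP (desc_ok (Ordinal lt_i)) (Ordinal lt_j); rewrite /= desc /= ground_j.
    by rewrite (_ : j - (j - _) = term_desc (take j p)) //; lia.
  split=> // [|j /andP[j_gt0 lt_jp] ground_j].
    have [-> // | np] := eqVneq p [::].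
    have := desc_return (size p); rewrite eqxx take_size; apply.
      by rewrite lt0n size_eq0 np /=.
    exact: ends_at_ground_size.
  by have := desc_return j; rewrite ltn_eqF //; apply => //; rewrite j_gt0 ltnW.
apply/andP; split=> //; apply/forallP => i; apply/forallP => j; apply/implyP => desc.
have /and5P[lt_ij le_jp _ _ _] := desc.
rewrite -(term_desc_descent desc); case: eqP => [-> | ne_j]; first by rewrite take_size.
by apply/implyP; apply: odd_p; apply/andP; split; lia.
Qed.

Definition odd_returns (s : seq bool) : Prop :=
  dyck s /\ forall j, 0 < j <= size s -> ends_at_ground s j -> odd (term_desc (take j s)).

Lemma returns_cat_elevate S O : dyck S -> dyck O ->
  (forall j, 0 < j < size (S ++ elevate O) -> ends_at_ground (S ++ elevate O) j ->
     odd (term_desc (take j (S ++ elevate O))))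
  <-> odd_returns S.
Proof.
move=> dyck_S dyck_O; rewrite size_cat size_elevate.
split=> [odd_p | [_ odd_S] j /andP[j_gt0 lt_j] /eqP ground_j].
  split=> // j /andP[j_gt0 le_jS] ground_j.
  have := odd_p j; rewrite takel_cat // ends_at_ground_catl //.
  by apply=> //; rewrite j_gt0; lia.
have le_jS : j <= size S.
  rewrite leqNgt; apply/negP => lt_Sj.
  have j_inside : size S < j < size S + (size O).+2 by rewrite lt_Sj.
  by have := cat_elevate_above dyck_S dyck_O j_inside; rewrite ground_j ltnn.
rewrite takel_cat //; apply: odd_S; first by rewrite j_gt0.
by rewrite -(ends_at_ground_catl (elevate O)) //; apply/eqP.
Qed.

Lemma even_odd_split Y : dyck Y ->
  exists Q S, [/\ Y = Q ++ S, dyck Q, ~~ odd (term_desc Q) & odd_returns S].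
Proof.
move=> dyck_Y.
pose P j := [&& j <= size Y, ends_at_ground Y j & ~~ odd (term_desc (take j Y))].
have P0 : exists j, P j by exists 0; rewrite /P /ends_at_ground /ups /downs take0.
have P_bound i : P i -> i <= size Y by case/andP.
have [j /and3P[le_jY ground_j even_j] max_j] := ex_maxnP P0 P_bound.
have dyck_Q := dyck_take_return dyck_Y ground_j; have [_ count_Q] := dyck_Q.
have dyck_S := dyck_drop_return dyck_Y ground_j.
have size_Q : size (take j Y) = j by rewrite size_takel.
exists (take j Y), (drop j Y); split=> //; first by rewrite cat_take_drop.
split=> // k /andP[k_gt0 le_k] ground_k.
have le_jk : j + k <= size Y by move: le_k; rewrite size_drop; lia.
have ground_jk : ends_at_ground Y (j + k).
  by have := ends_at_ground_catr (drop j Y) k count_Q; rewrite size_Q cat_take_drop ground_k.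
have nonempty : take k (drop j Y) != [::] by rewrite -size_eq0 size_takel //; lia.
have : ~~ P (j + k) by apply/negP => /max_j; lia.
rewrite /P le_jk ground_jk takeD term_desc_cat_dyck //= ?negbK //.
exact: dyck_take_return dyck_S ground_k.
Qed.

Lemma even_odd_split_uniq Q S Q' S' :
  dyck Q -> ~~ odd (term_desc Q) -> odd_returns S ->
  dyck Q' -> ~~ odd (term_desc Q') -> odd_returns S' ->
  Q ++ S = Q' ++ S' -> Q = Q' /\ S = S'.
Proof.
wlog le_QQ' : Q S Q' S' / size Q <= size Q'.
  move=> wlog_le dyck_Q even_Q odd_S dyck_Q' even_Q' odd_S' eq_QS.
  have [le | /ltnW le] := leqP (size Q) (size Q'); first exact: wlog_le.
  by have [-> ->] := wlog_le Q' S' Q S le dyck_Q' even_Q' odd_S' dyck_Q even_Q odd_S (esym eq_QS).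
move=> [_ count_Q] _ [dyck_S odd_S] [_ count_Q'] even_Q' _ eq_QS.
suff eq_size : size Q = size Q'.
  by move/eqP: eq_QS; rewrite eqseq_cat // => /andP[/eqP -> /eqP ->].
apply/eqP; rewrite eqn_leq le_QQ' leqNgt; apply/negP => lt_QQ'.
have size_QS : size Q' <= size (Q ++ S) by rewrite eq_QS size_cat leq_addr.
have [k size_Q'] : exists k, size Q' = size Q + k.
  by exists (size Q' - size Q); rewrite subnKC.
have Q'E : Q' = Q ++ take k S.
  rewrite -[Q'](@take_size_cat _ (size Q') Q' S') // -eq_QS size_Q' takeD.
  by rewrite take_size_cat // drop_size_cat.
have ground_k : ends_at_ground S k.
  rewrite -(ends_at_ground_catr _ _ count_Q) -size_Q' eq_QS ends_at_ground_catl //.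
  by rewrite /ends_at_ground ups_over // downs_over // count_Q'.
have k_range : 0 < k <= size S by move: size_QS; rewrite size_cat; lia.
have nonempty : take k S != [::].
  by have /andP[k_gt0 le_kS] := k_range; rewrite -size_eq0 size_takel // -lt0n.
move: even_Q'; rewrite Q'E term_desc_cat_dyck ?(odd_S k k_range ground_k) //.
exact: dyck_take_return dyck_S ground_k.
Qed.

Definition A_corr (p x : seq bool) : Prop := exists S W Q,
  [/\ odd_returns S, dyck W, dyck Q, ~~ odd (term_desc Q)
    & p = S ++ elevate (W ++ elevate Q) /\ x = Q ++ S ++ elevate W].

Lemma A_corr_of_in_A n p : 0 < n -> in_A n p -> exists x, A_corr p x.
Proof.
move=> n_gt0 /in_A_returns[/dyck_pathP[dyck_p count_p] even_p odd_p].
have np : p != [::] by apply: contraTneq n_gt0 => p0; rewrite -count_p p0.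
have [S [O [pE dyck_S dyck_O]]] := dyck_last_arch dyck_p np.
rewrite pE term_desc_cat_elevate //= negbK in even_p.
have nO : O != [::] by apply: contraTneq even_p => ->.
have [W [Q [OE dyck_W dyck_Q]]] := dyck_last_arch dyck_O nO.
rewrite OE term_desc_cat_elevate //= in even_p.
exists (Q ++ S ++ elevate W), S, W, Q; split=> //; last by rewrite pE OE.
by apply/(returns_cat_elevate dyck_S dyck_O); rewrite -pE.
Qed.

Lemma in_A_of_A_corr p x : A_corr p x -> in_A (count id p) p.
Proof.
case=> S [W [Q [odd_S dyck_W dyck_Q even_Q [pE _]]]].
have [dyck_S _] := odd_S.
have dyck_O : dyck (W ++ elevate Q) by apply/dyck_cat/dyck_elevate.
have dyck_p : dyck p by rewrite pE; apply/dyck_cat/dyck_elevate.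
apply/in_A_returns; split; first exact/dyck_pathP.
  by rewrite pE !term_desc_cat_elevate //= negbK.
by rewrite pE; apply/returns_cat_elevate.
Qed.

Lemma A_corr_of_dyck x : dyck x -> x != [::] -> exists p, A_corr p x.
Proof.
move=> dyck_x nx; have [Y [W [xE dyck_Y dyck_W]]] := dyck_last_arch dyck_x nx.
have [Q [S [YE dyck_Q even_Q odd_S]]] := even_odd_split dyck_Y.
by exists (S ++ elevate (W ++ elevate Q)), S, W, Q; split=> //; rewrite xE YE catA.
Qed.

Lemma A_corr_dyck p x : A_corr p x ->
  [/\ dyck x, count id p = (count id x).+1 & size p = (size x).+2].
Proof.
case=> S [W [Q [[dyck_S _] dyck_W dyck_Q _ [-> ->]]]].
split; first by apply/dyck_cat/dyck_cat/dyck_elevate.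
  by rewrite !(count_cat, count_elevate) /=; lia.
by rewrite !(size_cat, size_elevate); lia.
Qed.

Lemma A_corr_functional p x x' : A_corr p x -> A_corr p x' -> x = x'.
Proof.
case=> S [W [Q [[dyck_S _] dyck_W dyck_Q _ [-> ->]]]].
case=> S' [W' [Q' [[dyck_S' _] dyck_W' dyck_Q' _ [eq_p ->]]]].
have dyck_O := dyck_cat dyck_W (dyck_elevate dyck_Q).
have dyck_O' := dyck_cat dyck_W' (dyck_elevate dyck_Q').
have [-> eq_O] := cat_elevate_inj dyck_S dyck_O dyck_S' dyck_O' eq_p.
by have [-> ->] := cat_elevate_inj dyck_W dyck_Q dyck_W' dyck_Q' eq_O.
Qed.

Lemma A_corr_injective p p' x : A_corr p x -> A_corr p' x -> p = p'.
Proof.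
case=> S [W [Q [odd_S dyck_W dyck_Q even_Q [-> ->]]]].
case=> S' [W' [Q' [odd_S' dyck_W' dyck_Q' even_Q' [-> eq_x]]]].
have [[dyck_S _] [dyck_S' _]] := (odd_S, odd_S').
move: eq_x; rewrite !catA => eq_x.
have [eq_QS ->] :=
  cat_elevate_inj (dyck_cat dyck_Q dyck_S) dyck_W (dyck_cat dyck_Q' dyck_S') dyck_W' eq_x.
by have [-> ->] := even_odd_split_uniq dyck_Q even_Q odd_S dyck_Q' even_Q' odd_S' eq_QS.
Qed.

Theorem theorem1 (n : nat) : 2 <= n -> #|A_set n| = catalan n.-1.
Proof.
case: n => [|m] //= m_gt0; rewrite -card_dyck_paths //.
apply: (card_rel_bij (R := fun t u => A_corr (val t) (val u))).
- move=> t; rewrite inE => At; have [x Rtx] := A_corr_of_in_A (ltn0Sn m) At.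
  have [dyck_x count_x size_x] := A_corr_dyck Rtx.
  have size_x' : size x == 2 * m by move: size_x; rewrite size_tuple => /eqP; lia.
  exists (Tuple size_x') => //; rewrite inE; apply/dyck_pathP; split=> //.
  by case/andP: At => /dyck_pathP[_]; rewrite count_x => -[].
- move=> u; rewrite inE => /dyck_pathP[dyck_u count_u].
  have nu : tval u != [::] by rewrite -size_eq0 size_tuple; lia.
  have [p Rpu] := A_corr_of_dyck dyck_u nu.
  have [_ count_p size_p] := A_corr_dyck Rpu.
  have size_p' : size p == 2 * m.+1 by rewrite size_p size_tuple; lia.
  have := in_A_of_A_corr Rpu; rewrite count_p count_u => A_p.
  by exists (Tuple size_p'); rewrite // inE.
- by move=> t u u' Rtu Rtu'; apply: val_inj; apply: A_corr_functional Rtu Rtu'.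
- by move=> t t' u Rtu Rt'u; apply: val_inj; apply: A_corr_injective Rtu Rt'u.
Qed.
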